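(* In the Call-by-Value probabilistic $\lambda$-calculus (as defined in the context), $\Rrightarrow_E$ is asymptotically complete for $\Rightarrow$: for every multi-distribution $\mathbf m$, if $\mathbf m\Rightarrow^{\mathrm{obs}_{\mathrm{Nnf}}}\mathbf r$ then $\mathbf m\Rrightarrow_E^{\mathrm{obs}_{\mathrm{Nnf}}}\mathbf s$ for some $\mathbf s$ with $\mathbf r\le\mathbf s$.
   Context: Terms $\Lambda_\oplus$: $M::=x\mid\lambda x.M\mid MM\mid M\oplus M$; values $V::=x\mid\lambda x.M$. Contexts $C::=[\,]\mid MC\mid CM\mid\lambda x.C\mid C\oplus M\mid M\oplus C$; weak contexts $W::=[\,]\mid WM\mid MW$. A multi-distribution is a finite multiset $[p_iM_i]_{i\in I}$ with $p_i\in(0,1]$, $\sum_ip_i\le1$; $+$ is multiset union, $q\cdot[p_iM_i]_i=[(qp_i)M_i]_i$, $[M]:=[1M]$. $C[(\lambda x.M)V]\to_{\beta_v}[C[M\{V/x\}]]$; $W[M\oplus N]\to_\oplus[\tfrac12W[M],\tfrac12W[N]]$; $\to:=\to_{\beta_v}\cup\to_\oplus$; surface reduction $\to_s$ is $\to_\oplus$ together with the closure of $\beta_v$ under weak contexts. $M$ is $\to$-normal (surface-normal) if no $\mathbf m$ with $M\to\mathbf m$ ($M\to_s\mathbf m$); $\mathrm{Nnf}$ is the set of $\to$-normal terms. Lifting $\Rightarrow_r$ of $r$: least relation with $[M]\Rightarrow_r[M]$; $[M]\Rightarrow_r\mathbf m$ if $M\,r\,\mathbf m$; $[p_iM_i]_{i\in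 I}\Rightarrow_r\sum_ip_i\cdot\mathbf m_i$ if $[M_i]\Rightarrow_r\mathbf m_i$ for all $i$. Full lifting $\Rrightarrow_r$: same but the first rule $[M]\Rrightarrow_r[M]$ only when $M$ is $\to$-normal. $\Rightarrow$ is the lifting of $\to$. Let $\rightsquigarrow_U$ be the unbiased iteration of weak $\beta_v$-reduction on $\Lambda_\oplus$: if $M\to_wM'$ (closure of $\beta_v$ under weak contexts) then $M\rightsquigarrow_UM'$; if $M$ is $\to_w$-normal: $\lambda x.P\rightsquigarrow_U\lambda x.P'$, $PQ\rightsquigarrow_UP'Q$, $PQ\rightsquigarrow_UPQ'$, $P\oplus Q\rightsquigarrow_UP'\oplus Q$, $P\oplus Q\rightsquigarrow_UP\oplus Q'$ whenever $P\rightsquigarrow_UP'$, resp. $Q\rightsquigarrow_UQ'$. $\rightsquigarrow_E$: if $M$ is not surface-normal and $M\to_s\mathbf m$ then $M\rightsquigarrow_E\mathbf m$; if $M$ is surface-normal and $M\rightsquigarrow_UM'$ then $M\rightsquigarrow_E[M']$; $\Rrightarrow_E$ is its full lifting. $\mathrm{obs}_{\mathrm{Nnf}}([p_iM_i]_{i\in I})$ is the subdistribution $\mu$ on $\mathrm{Nnf}$ with $\mu(N)=\sum_{i:\,M_i=N}p_i$, subdistributions ordered pointwise. For a relation $R$ on multi-distributions, $\mathbf m\,R^{\mathrm{obs}_{\mathrm{Nnf}}}\,\mathbf r$ means there is a maximal $R$-sequence $(\mathbf m_n)_n$ from $\mathbf m$ (infinite, or finite ending in an $R$-normal element and then continued constantly)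 with $\sup_n\mathrm{obs}_{\mathrm{Nnf}}(\mathbf m_n)=\mathbf r$. *)

From Stdlib Require Import Reals List Arith.
From Stdlib Require Import ClassicalDescription.
Import ListNotations.
Open Scope R_scope.

(** Terms of Lambda_(+), with de Bruijn indices (Var n, Lam binds index 0). *)
Inductive term : Type :=
| Var : nat -> term
| Lam : term -> term
| App : term -> term -> term
| Plus : term -> term -> term.

Definition term_eq_dec : forall M N : term, {M = N} + {M <> N}.
Proof. decide equality; apply Nat.eq_dec. Defined.

Definition is_value (V : term) : Prop :=
  match V with Var _ | Lam _ => True | _ => False end.

Fixpoint lift_rec (n k : nat) (t : term) : term :=
  match t with
  | Var i => if (k <=? i)%nat then Var (n + i) else Var i
  | Lam M => Lam (lift_rec n (S k) M)
  | App M N => App (lift_rec n k M) (lift_rec n k N)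
  | Plus M N => Plus (lift_rec n k M) (lift_rec n k N)
  end.

Fixpoint subst_rec (u t : term) (k : nat) : term :=
  match t with
  | Var i => if (i <? k)%nat then Var i
             else if (i =? k)%nat then lift_rec k 0 u else Var (pred i)
  | Lam M => Lam (subst_rec u M (S k))
  | App M N => App (subst_rec u M k) (subst_rec u N k)
  | Plus M N => Plus (subst_rec u M k) (subst_rec u N k)
  end.

Definition subst0 (V M : term) : term := subst_rec V M 0.

(** Multi-distributions: finite lists (multisets up to permutation) of weighted terms. *)
Definition mdist := list (R * term).

Definition weight (m : mdist) : R := fold_right (fun pM acc => fst pM + acc) 0 m.

Definition is_mdist (m : mdist) : Prop :=
  Forall (fun pM => 0 < fst pM <= 1) m /\ weight m <= 1.

Definition scale (q : R) (m : mdist) : mdist :=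
  map (fun pM => (q * fst pM, snd pM)) m.

Definition dirac (M : term) : mdist := [(1, M)].

Inductive beta_full : term -> term -> Prop :=
| bf_beta : forall M V, is_value V -> beta_full (App (Lam M) V) (subst0 V M)
| bf_appl : forall M M' N, beta_full M M' -> beta_full (App M N) (App M' N)
| bf_appr : forall M N N', beta_full N N' -> beta_full (App M N) (App M N')
| bf_lam  : forall M M', beta_full M M' -> beta_full (Lam M) (Lam M')
| bf_plusl : forall M M' N, beta_full M M' -> beta_full (Plus M N) (Plus M' N)
| bf_plusr : forall M N N', beta_full N N' -> beta_full (Plus M N) (Plus M N').

Inductive beta_weak : term -> term -> Prop :=
| bw_beta : forall M V, is_value V -> beta_weak (App (Lam M) V) (subst0 V M)
| bw_appl : forall M M' N, beta_weak M M' -> beta_weak (App M N) (App M' N)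
| bw_appr : forall M N N', beta_weak N N' -> beta_weak (App M N) (App M N').

(** oplus_split M M1 M2 : M = W[A (+) B], M1 = W[A], M2 = W[B] *)
Inductive oplus_split : term -> term -> term -> Prop :=
| os_base : forall A B, oplus_split (Plus A B) A B
| os_appl : forall M M1 M2 N, oplus_split M M1 M2 ->
    oplus_split (App M N) (App M1 N) (App M2 N)
| os_appr : forall M N N1 N2, oplus_split N N1 N2 ->
    oplus_split (App M N) (App M N1) (App M N2).

Definition oplus_step (M : term) (m : mdist) : Prop :=
  exists M1 M2, oplus_split M M1 M2 /\ m = [(1/2, M1); (1/2, M2)].

Definition step (M : term) (m : mdist) : Prop :=
  (exists N, beta_full M N /\ m = dirac N) \/ oplus_step M m.

Definition surface_step (M : term) (m : mdist) : Prop :=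
  (exists N, beta_weak M N /\ m = dirac N) \/ oplus_step M m.

Definition normal (M : term) : Prop := forall m, ~ step M m.
Definition surface_normal (M : term) : Prop := forall m, ~ surface_step M m.
Definition weak_normal (M : term) : Prop := forall N, ~ beta_weak M N.

Inductive U_step : term -> term -> Prop :=
| U_weak : forall M M', beta_weak M M' -> U_step M M'
| U_lam : forall P P', weak_normal (Lam P) -> U_step P P' -> U_step (Lam P) (Lam P')
| U_appl : forall P P' Q, weak_normal (App P Q) -> U_step P P' ->
    U_step (App P Q) (App P' Q)
| U_appr : forall P Q Q', weak_normal (App P Q) -> U_step Q Q' ->
    U_step (App P Q) (App P Q')
| U_plusl : forall P P' Q, weak_normal (Plus P Q) -> U_step P P' ->
    U_step (Plus P Q) (Plus P' Q)
| U_plusr : forall P Q Q', weak_normal (Plus P Q) -> U_step Q Q' ->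
    U_step (Plus P Q) (Plus P Q').

Definition E_step (M : term) (m : mdist) : Prop :=
  (~ surface_normal M /\ surface_step M m) \/
  (surface_normal M /\ exists M', U_step M M' /\ m = dirac M').

(** Lifting of r : term -> mdist -> Prop to multi-distributions.
    [full = false] : the lifting =>_r ([M] =>_r [M] always);
    [full = true]  : the full lifting ([M] => [M] only for ->-normal M). *)
Inductive lift_single (full : bool) (r : term -> mdist -> Prop) : term -> mdist -> Prop :=
| ls_refl : forall M, (full = true -> normal M) -> lift_single full r M (dirac M)
| ls_step : forall M m, r M m -> lift_single full r M m.

Inductive lift_gen (full : bool) (r : term -> mdist -> Prop) : mdist -> mdist -> Prop :=
| lg_nil : lift_gen full r [] []
| lg_cons : forall p M m l l', lift_single full r M m -> lift_gen full r l l' ->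
    lift_gen full r ((p, M) :: l) (scale p m ++ l').

Definition lift (r : term -> mdist -> Prop) := lift_gen false r.
Definition full_lift (r : term -> mdist -> Prop) := lift_gen true r.

Definition Rstep : mdist -> mdist -> Prop := lift step.
Definition RstepE : mdist -> mdist -> Prop := full_lift E_step.

(** Subdistributions on Nnf, as functions term -> R (0 outside Nnf) *)
Definition subdist := term -> R.

Definition obs_Nnf (m : mdist) : subdist := fun N =>
  if excluded_middle_informative (normal N) then
    fold_right (fun pM acc => (if term_eq_dec (snd pM) N then fst pM else 0) + acc) 0 m
  else 0.

Definition maximal_seq (Rel : mdist -> mdist -> Prop) (ms : nat -> mdist) : Prop :=
  forall n, Rel (ms n) (ms (S n)) \/
            ((forall x, ~ Rel (ms n) x) /\ ms (S n) = ms n).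

Definition sup_obs (ms : nat -> mdist) (r : subdist) : Prop :=
  forall N, is_lub (fun x => exists n, x = obs_Nnf (ms n) N) (r N).

Definition obs_rel (Rel : mdist -> mdist -> Prop) (m : mdist) (r : subdist) : Prop :=
  exists ms : nat -> mdist, ms 0%nat = m /\ maximal_seq Rel ms /\ sup_obs ms r.

Definition subdist_le (r s : subdist) : Prop := forall N, r N <= s N.

(* The witness is the deterministic instance of ~>_E that, in every non-normal
   term, fires a canonical ->_s step if there is one and a canonical ~>_U step
   otherwise; iterating its full lifting gives a maximal ⇛_E sequence.  Let
   [Eprob N k X] be the probability that this strategy, started at X, sits at the
   normal form N after k steps.  The heart of the proof is that every step
   X -> m is eventually dominated by the strategy: for each k some k' gives
   sum_m Eprob N k <= Eprob N k' X.  For beta_v steps this is shown by simulating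
   a weighted parallel reduction, whose weight drops whenever the strategy fires
   a redex of the development, and for (+) steps by a diamond argument.  Along
   any ⇒ sequence the observations are therefore bounded by the supremum of the
   observations of the strategy. *)

From Stdlib Require Import Reals List Lia Lra Arith ClassicalDescription.
Import ListNotations.

Local Open Scope nat_scope.

Fixpoint occ (k : nat) (t : term) : nat :=
  match t with
  | Var i => if i =? k then 1 else 0
  | Lam M => occ (S k) M
  | App M N | Plus M N => occ k M + occ k N
  end.

Ltac index_cases :=
  repeat (cbn [lift_rec subst_rec occ];
          match goal with
          | |- context [?a <=? ?b] => destruct (Nat.leb_spec a b)
          | |- context [?a <? ?b] => destruct (Nat.ltb_spec a b)
          | |- context [?a =? ?b] => destruct (Nat.eqb_spec a b)
          end);
  cbn [lift_rec subst_rec occ].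

Lemma lift_rec_lift_rec_merge U p n i k : i <= k <= i + n ->
  lift_rec p k (lift_rec n i U) = lift_rec (p + n) i U.
Proof.
  revert i k; induction U; intros i k Hk; cbn [lift_rec];
    try (f_equal; solve [auto]).
  - index_cases; f_equal; lia.
  - f_equal. apply IHU; lia.
Qed.

Lemma lift_rec_lift_rec_permute U p n i k : i <= k ->
  lift_rec p i (lift_rec n k U) = lift_rec n (p + k) (lift_rec p i U).
Proof.
  revert i k; induction U; intros i k Hk; cbn [lift_rec];
    try (f_equal; solve [auto]).
  - index_cases; f_equal; lia.
  - f_equal. replace (S (p + k)) with (p + S k) by lia. apply IHU; lia.
Qed.

Lemma lift_rec_subst_rec U V n k p :
  lift_rec n (k + p) (subst_rec V U p) =
  subst_rec (lift_rec n k V) (lift_rec n (S (k + p)) U) p.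
Proof.
  revert p; induction U; intros p; cbn [lift_rec subst_rec];
    try (f_equal; solve [auto]).
  - index_cases; try (f_equal; lia); try lia.
    subst. rewrite (lift_rec_lift_rec_permute V p n 0 k) by lia.
    f_equal; lia.
  - f_equal. replace (S (k + p)) with (k + S p) by lia. apply IHU.
Qed.

Lemma subst_rec_lift_rec_cancel U V n i k : i <= k <= i + n ->
  subst_rec V (lift_rec (S n) i U) k = lift_rec n i U.
Proof.
  revert i k; induction U; intros i k Hk; cbn [lift_rec subst_rec];
    try (f_equal; solve [auto]).
  - index_cases; try (f_equal; lia); lia.
  - f_equal. apply IHU; lia.
Qed.

Lemma subst_rec_lift_rec_permute W V j k p :
  subst_rec V (lift_rec j p W) (j + k + p) = lift_rec j p (subst_rec V W (k + p)).
Proof.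
  revert p; induction W; intros p; cbn [lift_rec subst_rec];
    try (f_equal; solve [auto]).
  - index_cases; try (f_equal; lia); try lia.
    subst. rewrite lift_rec_lift_rec_merge by lia. f_equal; lia.
  - f_equal. replace (S (j + k + p)) with (j + k + S p) by lia.
    replace (S (k + p)) with (k + S p) by lia. apply IHW.
Qed.

Lemma subst_rec_subst_rec T V W j k :
  subst_rec V (subst_rec W T j) (j + k) =
  subst_rec (subst_rec V W k) (subst_rec V T (S (j + k))) j.
Proof.
  revert j; induction T; intros j; cbn [subst_rec];
    try (f_equal; solve [auto]).
  - index_cases; try (f_equal; lia); try lia.
    + subst. pose proof (subst_rec_lift_rec_permute W V j k 0) as E.
      rewrite !Nat.add_0_r in E. exact E.
    + subst. symmetry. apply subst_rec_lift_rec_cancel; lia.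
Qed.

Lemma occ_lift_rec_below T j i k : k < i -> occ k (lift_rec j i T) = occ k T.
Proof.
  revert i k; induction T; intros i k Hk; cbn [lift_rec occ].
  - index_cases; lia.
  - apply IHT; lia.
  - rewrite IHT1, IHT2 by lia; reflexivity.
  - rewrite IHT1, IHT2 by lia; reflexivity.
Qed.

Lemma occ_lift_rec_above U j i k : i <= k -> occ (j + k) (lift_rec j i U) = occ k U.
Proof.
  revert i k; induction U; intros i k Hk; cbn [lift_rec occ].
  - index_cases; lia.
  - replace (S (j + k)) with (j + S k) by lia. apply IHU; lia.
  - rewrite IHU1, IHU2 by lia; reflexivity.
  - rewrite IHU1, IHU2 by lia; reflexivity.
Qed.

Lemma occ_lift_rec_gap U n i j : i <= j < i + n -> occ j (lift_rec n i U) = 0.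
Proof.
  revert i j; induction U; intros i j Hj; cbn [lift_rec occ].
  - index_cases; lia.
  - apply IHU; lia.
  - rewrite IHU1, IHU2 by lia; reflexivity.
  - rewrite IHU1, IHU2 by lia; reflexivity.
Qed.

Lemma occ_subst_rec_below T U k j : j < k -> occ j (subst_rec U T k) = occ j T.
Proof.
  revert k j; induction T; intros k j Hj; cbn [subst_rec occ].
  - index_cases; try lia. apply occ_lift_rec_gap; lia.
  - apply IHT; lia.
  - rewrite IHT1, IHT2 by lia; reflexivity.
  - rewrite IHT1, IHT2 by lia; reflexivity.
Qed.

Lemma occ_subst_rec_above T U j k :
  occ (j + k) (subst_rec U T j) = occ (S (j + k)) T + occ j T * occ k U.
Proof.
  revert j; induction T; intros j; cbn [subst_rec occ].
  - index_cases; try lia. subst. rewrite occ_lift_rec_above by lia. lia.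
  - replace (S (j + k)) with (S j + k) by lia. apply IHT.
  - rewrite IHT1, IHT2. lia.
  - rewrite IHT1, IHT2. lia.
Qed.

(* Parallel beta_v-reduction indexed by the length of a sequential reduction
   realising it, in which the argument of a contracted redex is reduced once per
   copy made by the substitution. *)
Inductive par : nat -> term -> term -> Prop :=
| par_var : forall i, par 0 (Var i) (Var i)
| par_lam : forall n P P', par n P P' -> par n (Lam P) (Lam P')
| par_app : forall n1 n2 A A' B B', par n1 A A' -> par n2 B B' ->
    par (n1 + n2) (App A B) (App A' B')
| par_plus : forall n1 n2 A A' B B', par n1 A A' -> par n2 B B' ->
    par (n1 + n2) (Plus A B) (Plus A' B')
| par_beta : forall n1 n2 P P' V V', is_value V -> par n1 P P' -> par n2 V V' ->
    par (S (n1 + occ 0 P' * n2)) (App (Lam P) V) (subst0 V' P').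

Lemma is_value_lift_rec V j i : is_value V -> is_value (lift_rec j i V).
Proof.
  destruct V as [n | | |]; cbn [lift_rec]; try tauto.
  destruct (i <=? n); intros; exact I.
Qed.

Lemma is_value_subst_rec V W k : is_value V -> is_value W -> is_value (subst_rec V W k).
Proof.
  intros HV HW. destruct W as [i | | |]; cbn [subst_rec]; try exact HW.
  destruct (i <? k); [exact I|].
  destruct (i =? k); [apply is_value_lift_rec, HV | exact I].
Qed.

Lemma par_is_value n V V' : par n V V' -> is_value V -> is_value V'.
Proof. intros H; inversion H; cbn; tauto. Qed.

Lemma par_lam_inv n Q X : par n (Lam Q) X -> exists Q', X = Lam Q' /\ par n Q Q'.
Proof. intros H; inversion H; subst; eauto. Qed.

Lemma par_refl t : exists n, par n t t.
Proof.
  induction t as [i | P [n HP] | A [n1 HA] B [n2 HB] | A [n1 HA] B [n2 HB]];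
    eexists; constructor; eauto.
Qed.

Lemma beta_full_par M N : beta_full M N -> exists n, par n M N.
Proof.
  induction 1 as [M V HV | M M' N _ [n H] | M N N' _ [n H] | M M' _ [n H]
                 | M M' N _ [n H] | M N N' _ [n H]].
  - destruct (par_refl M) as [n1 H1], (par_refl V) as [n2 H2].
    eexists; apply par_beta; eauto.
  - destruct (par_refl N) as [n2 H2]; eexists; constructor; eauto.
  - destruct (par_refl M) as [n1 H1]; eexists; constructor; eauto.
  - eexists; constructor; eauto.
  - destruct (par_refl N) as [n2 H2]; eexists; constructor; eauto.
  - destruct (par_refl M) as [n1 H1]; eexists; constructor; eauto.
Qed.

Lemma par_lift_rec n V V' : par n V V' ->
  forall j i, par n (lift_rec j i V) (lift_rec j i V').
Proof.
  induction 1; intros j k; cbn [lift_rec].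
  - destruct (k <=? i); constructor.
  - constructor; auto.
  - constructor; auto.
  - constructor; auto.
  - pose proof (lift_rec_subst_rec P' V' j k 0) as E.
    rewrite !Nat.add_0_r in E. unfold subst0. rewrite E.
    rewrite <- (occ_lift_rec_below P' j (S k) 0) by lia.
    apply par_beta; auto using is_value_lift_rec.
Qed.

Lemma par_subst_rec n1 P P' : par n1 P P' ->
  forall n2 V V' k, is_value V -> par n2 V V' ->
  exists n, n <= n1 + occ k P' * n2 /\ par n (subst_rec V P k) (subst_rec V' P' k).
Proof.
  induction 1 as [i | n P P' _ IH | n1 n2 A A' B B' _ IHA _ IHB
                 | n1 n2 A A' B B' _ IHA _ IHB | n1 n2 P P' V V' HV _ IHP _ IHV];
    intros m W W' k HW HWW; cbn [subst_rec occ].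
  - destruct (Nat.ltb_spec i k); [|destruct (Nat.eqb_spec i k)].
    + exists 0. split; [destruct (Nat.eqb_spec i k); lia | constructor].
    + subst. exists m. split; [lia | apply par_lift_rec; auto].
    + exists 0. split; [lia | constructor].
  - destruct (IH m W W' (S k) HW HWW) as [n' [Hn' Hp]].
    exists n'. split; [lia | constructor; auto].
  - destruct (IHA m W W' k HW HWW) as [a [Ha HpA]].
    destruct (IHB m W W' k HW HWW) as [b [Hb HpB]].
    exists (a + b). split; [nia | constructor; auto].
  - destruct (IHA m W W' k HW HWW) as [a [Ha HpA]].
    destruct (IHB m W W' k HW HWW) as [b [Hb HpB]].
    exists (a + b). split; [nia | constructor; auto].
  - destruct (IHP m W W' (S k) HW HWW) as [a [Ha HpP]].
    destruct (IHV m W W' k HW HWW) as [b [Hb HpV]].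
    exists (S (a + occ 0 (subst_rec W' P' (S k)) * b)). split.
    + rewrite occ_subst_rec_below by lia. unfold subst0.
      pose proof (occ_subst_rec_above P' V' 0 k) as E. cbn in E. rewrite E.
      assert (occ 0 P' * b <= occ 0 P' * (n2 + occ k V' * m)) by (apply Nat.mul_le_mono_l; lia).
      nia.
    + unfold subst0. pose proof (subst_rec_subst_rec P' W' V' 0 k) as E. cbn in E.
      rewrite E. apply par_beta; auto using is_value_subst_rec.
Qed.

Definition valueb (t : term) : bool :=
  match t with Var _ | Lam _ => true | _ => false end.
Definition lamb (t : term) : bool := match t with Lam _ => true | _ => false end.
Definition redexb (A B : term) : bool := lamb A && valueb B.

Fixpoint wredb (t : term) : bool :=
  match t with App A B => wredb A || wredb B || redexb A B | _ => false end.
Fixpoint oredb (t : term) : bool :=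
  match t with Plus _ _ => true | App A B => oredb A || oredb B | _ => false end.
Fixpoint sredb (t : term) : bool :=
  match t with
  | Plus _ _ => true
  | App A B => sredb A || sredb B || redexb A B
  | _ => false
  end.
Fixpoint bredb (t : term) : bool :=
  match t with
  | Var _ => false
  | Lam P => bredb P
  | App A B => bredb A || bredb B || redexb A B
  | Plus A B => bredb A || bredb B
  end.
Definition normalb (t : term) : bool := negb (bredb t) && negb (oredb t).

Lemma valueb_spec t : valueb t = true <-> is_value t.
Proof. destruct t; cbn; intuition discriminate. Qed.

Lemma redexb_spec A B : redexb A B = true <-> exists Q, A = Lam Q /\ is_value B.
Proof.
  unfold redexb. split.
  - intros H. apply andb_prop in H as [HA HB].
    destruct A as [| Q | |]; try discriminate. exists Q. split; [reflexivity|].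
    apply valueb_spec, HB.
  - intros [Q [-> HB]]. apply valueb_spec, HB.
Qed.

Lemma redexb_lam Q B : is_value B -> redexb (Lam Q) B = true.
Proof. intros HB. apply redexb_spec; eauto. Qed.

Lemma sredb_spec t : sredb t = (wredb t || oredb t)%bool.
Proof.
  induction t as [| | A IHA B IHB |]; cbn; auto.
  rewrite IHA, IHB. destruct (wredb A), (wredb B), (oredb A), (oredb B), (redexb A B); auto.
Qed.

Lemma sredb_wredb t : sredb t = false -> wredb t = false.
Proof. rewrite sredb_spec. intros H. apply Bool.orb_false_elim in H as [H _]. exact H. Qed.

Lemma wredb_bredb t : wredb t = true -> bredb t = true.
Proof.
  induction t as [| | A IHA B IHB |]; cbn; try discriminate.
  destruct (wredb A), (wredb B); cbn; intros H;
    rewrite ?IHA, ?IHB, ?H, ?Bool.orb_true_r by reflexivity; reflexivity.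
Qed.

Lemma sredb_value V : is_value V -> sredb V = false.
Proof. destruct V; cbn; tauto. Qed.

Lemma sredb_normalb t : sredb t = true -> normalb t = false.
Proof.
  unfold normalb. rewrite sredb_spec. intros H.
  destruct (wredb t) eqn:Hw; [rewrite (wredb_bredb _ Hw); reflexivity|].
  cbn [orb] in H. rewrite H, Bool.andb_false_r. reflexivity.
Qed.

Lemma bredb_not_normalb t : normalb t = false -> sredb t = false -> bredb t = true.
Proof.
  intros Hn Hs. rewrite sredb_spec in Hs. apply Bool.orb_false_elim in Hs as [_ Ho].
  unfold normalb in Hn. rewrite Ho, Bool.andb_true_r in Hn.
  destruct (bredb t); [reflexivity | discriminate].
Qed.

Definition contract (A B : term) : term :=
  match A with Lam Q => subst0 B Q | _ => App A B end.

Fixpoint canon_w (t : term) : term :=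
  match t with
  | App A B =>
      if wredb A then App (canon_w A) B
      else if wredb B then App A (canon_w B)
      else contract A B
  | _ => t
  end.

Fixpoint canon_U (t : term) : term :=
  match t with
  | Var i => Var i
  | Lam P => Lam (canon_U P)
  | App A B =>
      if wredb (App A B) then canon_w (App A B)
      else if bredb A then App (canon_U A) B else App A (canon_U B)
  | Plus A B => if bredb A then Plus (canon_U A) B else Plus A (canon_U B)
  end.

Definition mapl (g : term -> term) (l : mdist) : mdist :=
  map (fun pX => (fst pX, g (snd pX))) l.

Fixpoint canon_s (t : term) : mdist :=
  match t with
  | Plus A B => [(1/2, A); (1/2, B)]%R
  | App A B =>
      if sredb A then mapl (fun X => App X B) (canon_s A)
      else if sredb B then mapl (App A) (canon_s B)
      else if redexb A B then dirac (contract A B) else []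
  | _ => []
  end.

Definition canon_E (t : term) : mdist :=
  if sredb t then canon_s t else dirac (canon_U t).

Definition canon_E_lift (l : mdist) : mdist :=
  flat_map (fun pX => scale (fst pX)
              (if normalb (snd pX) then dirac (snd pX) else canon_E (snd pX))) l.

Lemma beta_weak_wredb t N : beta_weak t N -> wredb t = true.
Proof.
  induction 1; cbn [wredb]; rewrite ?redexb_lam, ?IHbeta_weak, ?Bool.orb_true_r; auto.
Qed.

Lemma canon_w_beta_weak t : wredb t = true -> beta_weak t (canon_w t).
Proof.
  induction t as [| | A IHA B IHB |]; cbn; try discriminate.
  destruct (wredb A); [intros _; constructor; auto|].
  destruct (wredb B); [intros _; apply bw_appr; auto|].
  intros H. destruct (proj1 (redexb_spec A B) H) as [Q [-> HV]]. constructor; auto.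
Qed.

Lemma beta_full_bredb t N : beta_full t N -> bredb t = true.
Proof.
  induction 1; cbn [bredb]; rewrite ?redexb_lam, ?IHbeta_full, ?Bool.orb_true_r; auto.
Qed.

Lemma bredb_beta_full t : bredb t = true -> exists N, beta_full t N.
Proof.
  induction t as [| P IH | A IHA B IHB | A IHA B IHB]; cbn; try discriminate.
  - intros H. destruct (IH H) as [N HN]. eexists; constructor; eauto.
  - destruct (bredb A); [destruct (IHA eq_refl) as [N HN]; eexists; constructor; eauto|].
    destruct (bredb B); [destruct (IHB eq_refl) as [N HN]; eexists; apply bf_appr; eauto|].
    intros H. destruct (proj1 (redexb_spec A B) H) as [Q [-> HV]].
    eexists; constructor; auto.
  - destruct (bredb A); [destruct (IHA eq_refl) as [N HN]; eexists; constructor; eauto|].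
    intros H. destruct (IHB H) as [N HN]. eexists; apply bf_plusr; eauto.
Qed.

Lemma oplus_split_oredb t a b : oplus_split t a b -> oredb t = true.
Proof. induction 1; cbn; rewrite ?IHoplus_split, ?Bool.orb_true_r; auto. Qed.

Lemma oredb_oplus_split t : oredb t = true -> exists a b, oplus_split t a b.
Proof.
  induction t as [| | A IHA B IHB |]; cbn; try discriminate.
  - destruct (oredb A); [destruct (IHA eq_refl) as [a [b H]]; do 2 eexists; constructor; eauto|].
    intros H. destruct (IHB H) as [a [b Hs]]. do 2 eexists; apply os_appr; eauto.
  - do 2 eexists; constructor.
Qed.

Lemma normal_normalb t : normal t <-> normalb t = true.
Proof.
  unfold normal, normalb, step, oplus_step. split.
  - intros H. destruct (bredb t) eqn:Hb.
    + destruct (bredb_beta_full _ Hb) as [N HN]. exfalso. apply (H (dirac N)). eauto.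
    + destruct (oredb t) eqn:Ho; [|reflexivity].
      destruct (oredb_oplus_split _ Ho) as [a [b Hs]]. exfalso.
      apply (H [(1/2, a); (1/2, b)]%R). eauto.
  - intros H m [[N [HN _]] | [a [b [Hs _]]]].
    + rewrite (beta_full_bredb _ _ HN) in H. discriminate.
    + rewrite (oplus_split_oredb _ _ _ Hs), Bool.andb_false_r in H. discriminate.
Qed.

Lemma surface_normal_sredb t : sredb t = false -> surface_normal t.
Proof.
  rewrite sredb_spec. intros H m [[N [HN _]] | [a [b [Hs _]]]].
  - rewrite (beta_weak_wredb _ _ HN) in H. discriminate.
  - rewrite (oplus_split_oredb _ _ _ Hs), Bool.orb_true_r in H. discriminate.
Qed.

Lemma canon_s_surface_step t : sredb t = true -> surface_step t (canon_s t).
Proof.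
  unfold surface_step, oplus_step.
  induction t as [| | A IHA B IHB |]; cbn [sredb canon_s]; try discriminate.
  - destruct (sredb A).
    + intros _. destruct (IHA eq_refl) as [[N [HN ->]] | [a [b [Hs ->]]]].
      * left. exists (App N B). split; [constructor; auto | reflexivity].
      * right. do 2 eexists. split; [constructor; eauto | reflexivity].
    + destruct (sredb B).
      * intros _. destruct (IHB eq_refl) as [[N [HN ->]] | [a [b [Hs ->]]]].
        -- left. exists (App A N). split; [apply bw_appr; auto | reflexivity].
        -- right. do 2 eexists. split; [apply os_appr; eauto | reflexivity].
      * intros H. cbn [orb] in H. rewrite H. destruct (proj1 (redexb_spec A B) H) as [Q [-> HV]].
        left. eexists. split; [constructor; eauto | reflexivity].
  - intros _. right. do 2 eexists. split; [constructor | reflexivity].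
Qed.

Lemma canon_U_wredb t : wredb t = true -> canon_U t = canon_w t.
Proof. destruct t; cbn; try discriminate. intros ->. reflexivity. Qed.

Lemma weak_normal_wredb t : wredb t = false -> weak_normal t.
Proof. intros H N HN. rewrite (beta_weak_wredb _ _ HN) in H. discriminate. Qed.

Lemma canon_U_U_step t : bredb t = true -> U_step t (canon_U t).
Proof.
  induction t as [| P IH | A IHA B IHB | A IHA B IHB]; cbn [bredb canon_U].
  - discriminate.
  - intros Hb. apply U_lam; [apply weak_normal_wredb; reflexivity | auto].
  - intros Hb. destruct (wredb (App A B)) eqn:Hw; [apply U_weak, canon_w_beta_weak, Hw|].
    assert (HN : weak_normal (App A B)) by (apply weak_normal_wredb, Hw).
    cbn [wredb] in Hw. apply Bool.orb_false_elim in Hw as [_ HR].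
    rewrite HR, Bool.orb_false_r in Hb.
    destruct (bredb A); [apply U_appl; auto | apply U_appr; auto].
  - intros Hb. assert (HN : weak_normal (Plus A B)) by (apply weak_normal_wredb; reflexivity).
    destruct (bredb A); [apply U_plusl | apply U_plusr]; auto.
Qed.

Lemma canon_E_E_step t : normalb t = false -> E_step t (canon_E t).
Proof.
  intros Hn. unfold E_step, canon_E. destruct (sredb t) eqn:Hs.
  - left. split; [|apply canon_s_surface_step, Hs].
    intros Hsn. apply (Hsn _ (canon_s_surface_step _ Hs)).
  - right. split; [apply surface_normal_sredb, Hs|].
    exists (canon_U t). split; [|reflexivity].
    apply canon_U_U_step, bredb_not_normalb; assumption.
Qed.

Lemma RstepE_canon_E_lift l : RstepE l (canon_E_lift l).
Proof.
  induction l as [| [p X] l IH]; cbn; constructor; auto.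
  destruct (normalb X) eqn:Hn.
  - apply ls_refl. intros _. apply normal_normalb, Hn.
  - apply ls_step, canon_E_E_step, Hn.
Qed.

Lemma wredb_value V : is_value V -> wredb V = false.
Proof. destruct V; cbn; tauto. Qed.

Lemma canon_w_redex Q V : is_value V -> canon_w (App (Lam Q) V) = subst0 V Q.
Proof. intros HV. cbn [canon_w wredb]. rewrite wredb_value by exact HV. reflexivity. Qed.

Lemma par_weak_normal n A A' : par n A A' -> wredb A = false ->
  wredb A' = false /\ lamb A' = lamb A /\ valueb A' = valueb A.
Proof.
  induction 1 as [| | n1 n2 A A' B B' _ IHA _ IHB | | n1 n2 P P' V V' HV _ _ _ _];
    cbn [wredb]; intros Hw; auto.
  - apply Bool.orb_false_elim in Hw as [Hw HR]. apply Bool.orb_false_elim in Hw as [HwA HwB].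
    destruct (IHA HwA) as [HwA' [HlA _]], (IHB HwB) as [HwB' [_ HvB]].
    rewrite HwA', HwB'. unfold redexb in *. rewrite HlA, HvB, HR. auto.
  - rewrite redexb_lam, Bool.orb_true_r in Hw by exact HV. discriminate.
Qed.

Lemma par_surface_normal n A A' : par n A A' -> sredb A = false -> sredb A' = false.
Proof.
  induction 1 as [| | n1 n2 A A' B B' HpA IHA HpB IHB | | n1 n2 P P' V V' HV _ _ _ _];
    cbn [sredb]; intros Hs; auto.
  - apply Bool.orb_false_elim in Hs as [Hs HR]. apply Bool.orb_false_elim in Hs as [HsA HsB].
    destruct (par_weak_normal _ _ _ HpA (sredb_wredb _ HsA)) as [_ [HlA _]].
    destruct (par_weak_normal _ _ _ HpB (sredb_wredb _ HsB)) as [_ [_ HvB]].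
    rewrite IHA, IHB by assumption.
    unfold redexb in *. rewrite HlA, HvB, HR. reflexivity.
  - rewrite redexb_lam, Bool.orb_true_r in Hs by exact HV. discriminate.
Qed.

Lemma par_beta_normal n A A' : par n A A' -> bredb A = false -> A' = A.
Proof.
  induction 1 as [| n P P' _ IH | n1 n2 A A' B B' _ IHA _ IHB
                 | n1 n2 A A' B B' _ IHA _ IHB | n1 n2 P P' V V' HV _ _ _ _];
    cbn [bredb]; intros Hb.
  - reflexivity.
  - rewrite IH; auto.
  - apply Bool.orb_false_elim in Hb as [Hb _]. apply Bool.orb_false_elim in Hb as [HA HB].
    rewrite IHA, IHB; auto.
  - apply Bool.orb_false_elim in Hb as [HA HB]. rewrite IHA, IHB; auto.
  - rewrite redexb_lam, Bool.orb_true_r in Hb by exact HV. discriminate.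
Qed.

Lemma par_canon_w n M M' : par n M M' -> wredb M = true ->
  (exists n', n' < n /\ par n' (canon_w M) M') \/
  (wredb M' = true /\ exists j, par j (canon_w M) (canon_w M')).
Proof.
  induction 1 as [| | n1 n2 A A' B B' HpA IHA HpB IHB | | n1 n2 P P' V V' HV HpP _ HpV _];
    try discriminate.
  - cbn [wredb canon_w]. destruct (wredb A) eqn:HwA.
    { intros _. destruct (IHA eq_refl) as [[n' [Hlt Hp]] | [HwA' [j Hp]]].
      - left. exists (n' + n2). split; [lia | constructor; auto].
      - right. rewrite HwA'. split; [reflexivity|]. eexists; constructor; eauto. }
    destruct (par_weak_normal _ _ _ HpA HwA) as [HwA' [HlA _]]. rewrite HwA'.
    destruct (wredb B) eqn:HwB.
    { intros _. destruct (IHB eq_refl) as [[n' [Hlt Hp]] | [HwB' [j Hp]]].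
      - left. exists (n1 + n'). split; [lia | constructor; auto].
      - right. rewrite HwB', Bool.orb_true_r. split; [reflexivity|].
        eexists; constructor; eauto. }
    destruct (par_weak_normal _ _ _ HpB HwB) as [HwB' [_ HvB]]. rewrite HwB'.
    intros HR. destruct (proj1 (redexb_spec A B) HR) as [Q [-> HV]].
    destruct (par_lam_inv _ _ _ HpA) as [Q' [-> HpQ]].
    assert (HV' : is_value B') by (eapply par_is_value; eauto).
    right. rewrite redexb_lam by exact HV'. split; [reflexivity|].
    destruct (par_subst_rec _ _ _ HpQ n2 B B' 0 HV HpB) as [j [_ Hp]]. eauto.
  - intros _. left. rewrite canon_w_redex by exact HV.
    destruct (par_subst_rec _ _ _ HpP n2 V V' 0 HV HpV) as [j [Hj Hp]].
    exists j. split; [lia | exact Hp].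
Qed.

Lemma par_canon_U_weak n M M' : par n M M' -> wredb M = true ->
  (exists n', n' < n /\ par n' (canon_U M) M') \/
  (bredb M' = true /\ exists j, par j (canon_U M) (canon_U M')).
Proof.
  intros Hp Hw. rewrite canon_U_wredb by exact Hw.
  destruct (par_canon_w _ _ _ Hp Hw) as [L | [Hw' R]]; [left; exact L | right].
  rewrite canon_U_wredb by exact Hw'. split; [apply wredb_bredb, Hw' | exact R].
Qed.

Lemma par_canon_U n M M' : par n M M' -> bredb M = true ->
  (exists n', n' < n /\ par n' (canon_U M) M') \/
  (bredb M' = true /\ exists j, par j (canon_U M) (canon_U M')).
Proof.
  intros Hp. induction Hp as [| n P P' HpP IH | n1 n2 A A' B B' HpA IHA HpB IHB
                 | n1 n2 A A' B B' HpA IHA HpB IHB | n1 n2 P P' V V' HV HpP _ HpV _];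
    intros Hb.
  - discriminate.
  - destruct (IH Hb) as [[n' [Hlt Hp]] | [Hb' [j Hp]]].
    + left. exists n'. split; [lia | constructor; auto].
    + right. split; [exact Hb'|]. eexists; constructor; eauto.
  - destruct (wredb (App A B)) eqn:Hw; [apply par_canon_U_weak; [constructor|]; auto|].
    destruct (par_weak_normal _ _ _ (par_app _ _ _ _ _ _ HpA HpB) Hw) as [Hw' _].
    cbn [bredb canon_U] in *. rewrite Hw, Hw'.
    cbn [wredb] in Hw. apply Bool.orb_false_elim in Hw as [_ HR].
    rewrite HR, Bool.orb_false_r in Hb.
    destruct (bredb A) eqn:HbA.
    + destruct (IHA eq_refl) as [[n' [Hlt Hp]] | [HbA' [j Hp]]].
      * left. exists (n' + n2). split; [lia | constructor; auto].
      * right. rewrite HbA'. split; [reflexivity|]. eexists; constructor; eauto.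
    + pose proof (par_beta_normal _ _ _ HpA HbA); subst A'. rewrite HbA.
      destruct (IHB Hb) as [[n' [Hlt Hp]] | [HbB' [j Hp]]].
      * left. exists (n1 + n'). split; [lia | constructor; auto].
      * right. rewrite HbB', Bool.orb_true_r. split; [reflexivity|].
        eexists; constructor; eauto.
  - cbn [bredb canon_U] in *. destruct (bredb A) eqn:HbA.
    + destruct (IHA eq_refl) as [[n' [Hlt Hp]] | [HbA' [j Hp]]].
      * left. exists (n' + n2). split; [lia | constructor; auto].
      * right. rewrite HbA'. split; [reflexivity|]. eexists; constructor; eauto.
    + pose proof (par_beta_normal _ _ _ HpA HbA); subst A'. rewrite HbA.
      destruct (IHB Hb) as [[n' [Hlt Hp]] | [HbB' [j Hp]]].
      * left. exists (n1 + n'). split; [lia | constructor; auto].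
      * right. rewrite HbB'. split; [reflexivity|]. eexists; constructor; eauto.
  - apply par_canon_U_weak; [apply par_beta; auto|].
    cbn [wredb]. rewrite redexb_lam, Bool.orb_true_r by exact HV. reflexivity.
Qed.

Definition par_pair (a b : R * term) : Prop :=
  fst a = fst b /\ exists j, par j (snd a) (snd b).

Lemma Forall2_par_pair_mapl g h l l' : Forall2 par_pair l l' ->
  (forall X X' j, par j X X' -> exists j', par j' (g X) (h X')) ->
  Forall2 par_pair (mapl g l) (mapl h l').
Proof.
  intros Hl Hgh. induction Hl as [| a b l l' [Hw [j Hp]] _ IH]; constructor; auto.
  split; [exact Hw | eapply Hgh, Hp].
Qed.

Lemma par_canon_s n M M' : par n M M' -> sredb M = true ->
  (exists X n', canon_s M = dirac X /\ n' < n /\ par n' X M') \/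
  (sredb M' = true /\ Forall2 par_pair (canon_s M) (canon_s M')).
Proof.
  induction 1 as [| | n1 n2 A A' B B' HpA IHA HpB IHB
                 | n1 n2 A A' B B' HpA _ HpB _ | n1 n2 P P' V V' HV HpP _ HpV _];
    cbn [sredb canon_s]; intros Hs; try discriminate.
  - destruct (sredb A) eqn:HsA.
    { destruct (IHA eq_refl) as [[X [n' [-> [Hlt Hp]]]] | [HsA' Hl]].
      - left. exists (App X B), (n' + n2). split; [reflexivity | split; [lia | constructor; auto]].
      - right. rewrite HsA'. split; [reflexivity|].
        apply Forall2_par_pair_mapl; auto. intros; eexists; constructor; eauto. }
    rewrite (par_surface_normal _ _ _ HpA HsA). destruct (sredb B) eqn:HsB.
    { destruct (IHB eq_refl) as [[X [n' [-> [Hlt Hp]]]] | [HsB' Hl]].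
      - left. exists (App A X), (n1 + n'). split; [reflexivity | split; [lia | constructor; auto]].
      - right. rewrite HsB'. split; [reflexivity|].
        apply Forall2_par_pair_mapl; auto. intros; eexists; constructor; eauto. }
    rewrite (par_surface_normal _ _ _ HpB HsB). cbn [orb] in Hs. rewrite Hs.
    destruct (proj1 (redexb_spec A B) Hs) as [Q [-> HVB]].
    destruct (par_lam_inv _ _ _ HpA) as [Q' [-> HpQ]].
    assert (HVB' : is_value B') by (eapply par_is_value; eauto).
    right. rewrite redexb_lam by exact HVB'. split; [reflexivity|].
    destruct (par_subst_rec _ _ _ HpQ n2 B B' 0 HVB HpB) as [j [_ Hp]].
    repeat constructor; eauto.
  - right. split; [reflexivity|]. repeat constructor; eauto.
  - left. rewrite sredb_value, redexb_lam by exact HV.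
    destruct (par_subst_rec _ _ _ HpP n2 V V' 0 HV HpV) as [j [Hj Hp]].
    exists (subst0 V P), j. split; [reflexivity | split; [lia | exact Hp]].
Qed.

Inductive oplus_split_all : mdist -> mdist -> mdist -> Prop :=
| osa_nil : oplus_split_all [] [] []
| osa_cons : forall p X X1 X2 l l1 l2, oplus_split X X1 X2 -> oplus_split_all l l1 l2 ->
    oplus_split_all ((p, X) :: l) ((p, X1) :: l1) ((p, X2) :: l2).

Lemma oplus_split_all_mapl g :
  (forall X X1 X2, oplus_split X X1 X2 -> oplus_split (g X) (g X1) (g X2)) ->
  forall l l1 l2, oplus_split_all l l1 l2 ->
  oplus_split_all (mapl g l) (mapl g l1) (mapl g l2).
Proof. intros Hg l l1 l2 H. induction H; constructor; auto. Qed.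

Lemma oplus_split_all_appr Y Y1 Y2 (l : mdist) : oplus_split Y Y1 Y2 ->
  oplus_split_all (mapl (fun Z => App Z Y) l) (mapl (fun Z => App Z Y1) l)
                  (mapl (fun Z => App Z Y2) l).
Proof. intros H. induction l; constructor; auto. apply os_appr, H. Qed.

Lemma oplus_split_sredb M M1 M2 : oplus_split M M1 M2 -> sredb M = true.
Proof.
  intros H. rewrite sredb_spec, (oplus_split_oredb _ _ _ H), Bool.orb_true_r. reflexivity.
Qed.

Lemma oplus_split_canon_s M M1 M2 : oplus_split M M1 M2 ->
  canon_s M = [(1/2, M1); (1/2, M2)]%R \/
  (sredb M1 = true /\ sredb M2 = true /\
   oplus_split_all (canon_s M) (canon_s M1) (canon_s M2)).
Proof.
  induction 1 as [A B | M M1 M2 N Hs IH | M N N1 N2 Hs IH]; cbn [sredb canon_s].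
  - left. reflexivity.
  - rewrite (oplus_split_sredb _ _ _ Hs).
    destruct IH as [-> | [H1 [H2 Hl]]]; [left; reflexivity | right].
    rewrite H1, H2. repeat split.
    apply oplus_split_all_mapl; auto. intros; constructor; auto.
  - rewrite (oplus_split_sredb _ _ _ Hs).
    destruct (sredb M); cbn [orb].
    + right. repeat split. apply oplus_split_all_appr, Hs.
    + destruct IH as [-> | [H1 [H2 Hl]]]; [left; reflexivity | right].
      rewrite H1, H2. repeat split.
      apply oplus_split_all_mapl; auto. intros; apply os_appr; auto.
Qed.

Local Open Scope R_scope.

Definition sumw (g : term -> R) (l : mdist) : R :=
  fold_right (fun pX acc => fst pX * g (snd pX) + acc) 0 l.

Definition nonneg (l : mdist) : Prop := Forall (fun pX => 0 <= fst pX) l.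

Lemma sumw_app g l1 l2 : sumw g (l1 ++ l2) = sumw g l1 + sumw g l2.
Proof. unfold sumw. induction l1 as [| a l1 IH]; cbn; [ring | rewrite IH; ring]. Qed.

Lemma sumw_scale g p l : sumw g (scale p l) = p * sumw g l.
Proof. unfold sumw, scale. induction l as [| a l IH]; cbn; [ring | rewrite IH; ring]. Qed.

Lemma sumw_mapl g h l : sumw g (mapl h l) = sumw (fun Y => g (h Y)) l.
Proof. unfold sumw, mapl. induction l as [| a l IH]; cbn; [reflexivity | rewrite IH; reflexivity]. Qed.

Lemma sumw_dirac g X : sumw g (dirac X) = g X.
Proof. cbn. ring. Qed.

Lemma sumw_le g h l : nonneg l -> (forall Y, g Y <= h Y) -> sumw g l <= sumw h l.
Proof.
  intros Hl H. unfold sumw. induction Hl as [| x l Hx _ IH]; cbn; [lra|].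
  pose proof (Rmult_le_compat_l _ _ _ Hx (H (snd x))). lra.
Qed.

Lemma sumw_nonneg g l : nonneg l -> (forall Y, 0 <= g Y) -> 0 <= sumw g l.
Proof.
  intros Hl H. unfold sumw. induction Hl as [| x l Hx _ IH]; cbn; [lra|].
  pose proof (Rmult_le_pos _ _ Hx (H (snd x))). lra.
Qed.

Lemma nonneg_app l1 l2 : nonneg l1 -> nonneg l2 -> nonneg (l1 ++ l2).
Proof. intros; apply Forall_app; auto. Qed.

Lemma nonneg_scale p l : 0 <= p -> nonneg l -> nonneg (scale p l).
Proof.
  intros Hp Hl. induction Hl; constructor; auto. cbn. apply Rmult_le_pos; auto.
Qed.

Lemma nonneg_mapl h l : nonneg l -> nonneg (mapl h l).
Proof. intros Hl. induction Hl; constructor; auto. Qed.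

Lemma nonneg_canon_s t : nonneg (canon_s t).
Proof.
  induction t as [| | A IHA B IHB |]; cbn [canon_s]; repeat constructor; cbn; try lra.
  destruct (sredb A); [apply nonneg_mapl; auto|].
  destruct (sredb B); [apply nonneg_mapl; auto|].
  destruct (redexb A B); repeat constructor; cbn; lra.
Qed.

Lemma nonneg_canon_E t : nonneg (canon_E t).
Proof. unfold canon_E. destruct (sredb t); [apply nonneg_canon_s | repeat constructor; cbn; lra]. Qed.

Lemma mass_canon_s t : sumw (fun _ => 1) (canon_s t) <= 1.
Proof.
  induction t as [| | A IHA B IHB |]; cbn [canon_s]; try (cbn; lra).
  destruct (sredb A); [rewrite sumw_mapl; auto|].
  destruct (sredb B); [rewrite sumw_mapl; auto|].
  destruct (redexb A B); cbn; lra.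
Qed.

Lemma mass_canon_E t : sumw (fun _ => 1) (canon_E t) <= 1.
Proof. unfold canon_E. destruct (sredb t); [apply mass_canon_s | cbn; lra]. Qed.

Lemma par_canon_E n M M' : par n M M' -> normalb M = false ->
  (exists X n', canon_E M = dirac X /\ (n' < n)%nat /\ par n' X M') \/
  (normalb M' = false /\ Forall2 par_pair (canon_E M) (canon_E M')).
Proof.
  intros Hp Hn. unfold canon_E. destruct (sredb M) eqn:Hs.
  - destruct (par_canon_s _ _ _ Hp Hs) as [L | [Hs' Hl]]; [left; exact L | right].
    rewrite Hs'. split; [apply sredb_normalb, Hs' | exact Hl].
  - rewrite (par_surface_normal _ _ _ Hp Hs).
    destruct (par_canon_U _ _ _ Hp (bredb_not_normalb _ Hn Hs)) as [[n' [Hlt Hp']] | [Hb' Hpc]].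
    + left. exists (canon_U M), n'. auto.
    + right. split; [unfold normalb; rewrite Hb'; reflexivity|].
      repeat constructor; exact Hpc.
Qed.

Section Eprob.

Variable N : term.

Fixpoint Eprob (k : nat) (X : term) : R :=
  match k with
  | O => if normalb X then (if term_eq_dec X N then 1 else 0) else 0
  | S k => if normalb X then Eprob k X else sumw (Eprob k) (canon_E X)
  end.

Lemma Eprob_0_nonnormal X : normalb X = false -> Eprob 0 X = 0.
Proof. intros H. cbn. rewrite H. reflexivity. Qed.

Lemma Eprob_S_nonnormal k X : normalb X = false -> Eprob (S k) X = sumw (Eprob k) (canon_E X).
Proof. intros H. cbn [Eprob]. rewrite H. reflexivity. Qed.

Lemma Eprob_bounds k X : 0 <= Eprob k X <= 1.
Proof.
  revert X; induction k as [| k IH]; intros X; cbn [Eprob].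
  - destruct (normalb X); [destruct (term_eq_dec X N)|]; lra.
  - destruct (normalb X); [apply IH|]. split.
    + apply sumw_nonneg; [apply nonneg_canon_E | apply IH].
    + eapply Rle_trans; [|apply (mass_canon_E X)].
      apply sumw_le; [apply nonneg_canon_E | apply IH].
Qed.

Lemma Eprob_le_S k X : Eprob k X <= Eprob (S k) X.
Proof.
  revert X; induction k as [| k IH]; intros X.
  - cbn [Eprob]. destruct (normalb X); [lra|].
    apply sumw_nonneg; [apply nonneg_canon_E | intros Y; apply (Eprob_bounds 0 Y)].
  - destruct (normalb X) eqn:Hn.
    + cbn [Eprob]. rewrite Hn. lra.
    + rewrite !Eprob_S_nonnormal by exact Hn.
      apply sumw_le; [apply nonneg_canon_E | apply IH].
Qed.

Lemma Eprob_mono k k' X : (k <= k')%nat -> Eprob k X <= Eprob k' X.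
Proof. induction 1; [lra | eapply Rle_trans; [eassumption | apply Eprob_le_S]]. Qed.

Lemma sumw_Eprob_mono l k k' : nonneg l -> (k <= k')%nat ->
  sumw (Eprob k) l <= sumw (Eprob k') l.
Proof. intros Hl Hk. apply sumw_le; [exact Hl | intros; apply Eprob_mono, Hk]. Qed.

Lemma sumw_Eprob_canon_E_lift k l :
  sumw (Eprob k) (canon_E_lift l) = sumw (Eprob (S k)) l.
Proof.
  induction l as [| [p X] l IH]; [reflexivity|].
  cbn [canon_E_lift flat_map fst snd]. rewrite sumw_app, sumw_scale. fold (canon_E_lift l).
  rewrite IH. cbn [sumw fold_right fst snd]. cbn [Eprob].
  destruct (normalb X); [rewrite sumw_dirac|]; reflexivity.
Qed.

Lemma obs_Nnf_Eprob_0 l : obs_Nnf l N = sumw (Eprob 0) l.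
Proof.
  unfold obs_Nnf, sumw. destruct (excluded_middle_informative (normal N)) as [HN | HN];
    induction l as [| [p X] l IH]; cbn [fold_right fst snd]; try reflexivity;
    rewrite <- IH; cbn [Eprob].
  - destruct (term_eq_dec X N) as [-> |].
    + rewrite (proj1 (normal_normalb N) HN). ring.
    + destruct (normalb X); ring.
  - destruct (normalb X) eqn:Hn; [|ring]. destruct (term_eq_dec X N) as [-> |]; [|ring].
    exfalso. apply HN, normal_normalb, Hn.
Qed.

Lemma sumw_Eprob_iter_canon_E_lift k j l :
  sumw (Eprob j) (Nat.iter k canon_E_lift l) = sumw (Eprob (k + j)) l.
Proof.
  revert j. induction k as [| k IH]; intros j; [reflexivity|].
  rewrite Nat.iter_succ, sumw_Eprob_canon_E_lift, IH, Nat.add_succ_r. reflexivity.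
Qed.

Lemma obs_Nnf_iter_canon_E_lift k l :
  obs_Nnf (Nat.iter k canon_E_lift l) N = sumw (Eprob k) l.
Proof. rewrite obs_Nnf_Eprob_0, sumw_Eprob_iter_canon_E_lift, Nat.add_0_r. reflexivity. Qed.

Definition eventually_le (x : R) (a : mdist) : Prop :=
  exists k, x <= sumw (Eprob k) a.

Lemma eventually_le_refl k a : eventually_le (sumw (Eprob k) a) a.
Proof. exists k. apply Rle_refl. Qed.

Lemma eventually_le_weaken x y a : x <= y -> eventually_le y a -> eventually_le x a.
Proof. intros Hxy [k Hk]. exists k. lra. Qed.

Lemma eventually_le_zero a : nonneg a -> eventually_le 0 a.
Proof.
  intros Ha. exists 0%nat. apply sumw_nonneg; [exact Ha | intros; apply Eprob_bounds].
Qed.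

Lemma eventually_le_cons p X x y a : 0 <= p -> nonneg a ->
  eventually_le x (dirac X) -> eventually_le y a -> eventually_le (p * x + y) ((p, X) :: a).
Proof.
  intros Hp Ha [k1 Hk1] [k2 Hk2]. rewrite sumw_dirac in Hk1.
  exists (Nat.max k1 k2). cbn [sumw fold_right fst snd]. fold (sumw (Eprob (Nat.max k1 k2)) a).
  assert (Eprob k1 X <= Eprob (Nat.max k1 k2) X) by (apply Eprob_mono; lia).
  assert (sumw (Eprob k2) a <= sumw (Eprob (Nat.max k1 k2)) a)
    by (apply sumw_Eprob_mono; [exact Ha | lia]).
  pose proof (Rmult_le_compat_l p _ _ Hp (Rle_trans _ _ _ Hk1 H)). lra.
Qed.

Lemma eventually_le_Forall2 g a b : nonneg a ->
  Forall2 (fun x y => fst x = fst y /\ eventually_le (g (snd y)) (dirac (snd x))) a b ->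
  eventually_le (sumw g b) a.
Proof.
  intros Ha Hab. induction Hab as [| [p X] [q Y] a b [Hpq HXY] _ IH].
  - apply eventually_le_zero, Ha.
  - inversion Ha as [| ? ? Hp Ha']; subst. cbn in Hpq |- *. subst q.
    apply eventually_le_cons; auto.
Qed.

Lemma eventually_le_canon_E x X : normalb X = false ->
  eventually_le x (canon_E X) -> eventually_le x (dirac X).
Proof.
  intros Hn [k Hk]. exists (S k). rewrite sumw_dirac, Eprob_S_nonnormal by exact Hn. exact Hk.
Qed.

Lemma eventually_le_trans x b a : eventually_le x b ->
  (forall k, eventually_le (sumw (Eprob k) b) a) -> eventually_le x a.
Proof. intros [k Hk] Hba. eapply eventually_le_weaken; [exact Hk | apply Hba]. Qed.

(* Lexicographic induction on (k, n): either the strategy fires a redex of the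
   development, lowering n, or both sides make a strategy step, lowering k. *)
Lemma par_eventually_le k : forall n M M', par n M M' -> eventually_le (Eprob k M') (dirac M).
Proof.
  induction k as [k IHk] using (well_founded_induction lt_wf).
  intros n. induction n as [n IHn] using (well_founded_induction lt_wf).
  intros M M' Hp. destruct (normalb M) eqn:Hn.
  { assert (Hb : bredb M = false) by (unfold normalb in Hn; destruct (bredb M); auto).
    rewrite (par_beta_normal _ _ _ Hp Hb), <- (sumw_dirac (Eprob k)). apply eventually_le_refl. }
  apply eventually_le_canon_E; [exact Hn|].
  destruct (par_canon_E _ _ _ Hp Hn) as [[X [n' [-> [Hlt HpX]]]] | [Hn' Hl]].
  - exact (IHn n' Hlt X M' HpX).
  - destruct k as [| k].
    + rewrite Eprob_0_nonnormal by exact Hn'. apply eventually_le_zero, nonneg_canon_E.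
    + rewrite Eprob_S_nonnormal by exact Hn'.
      apply eventually_le_Forall2; [apply nonneg_canon_E|].
      eapply Forall2_impl; [|exact Hl]. intros x y [Hw [j Hj]].
      split; [exact Hw | exact (IHk k (Nat.lt_succ_diag_r k) j _ _ Hj)].
Qed.

Lemma oplus_split_all_eventually_le g l l1 l2 : nonneg l -> oplus_split_all l l1 l2 ->
  (forall X X1 X2, oplus_split X X1 X2 ->
     eventually_le (sumw g [(1/2, X1); (1/2, X2)]) (dirac X)) ->
  eventually_le (1/2 * sumw g l1 + 1/2 * sumw g l2) l.
Proof.
  intros Hl Hs Hg. induction Hs as [| p X X1 X2 l l1 l2 HX _ IH].
  - eapply eventually_le_weaken; [|apply eventually_le_zero, Hl]. cbn. lra.
  - inversion Hl as [| ? ? Hp Hl']; subst.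
    eapply eventually_le_weaken; [|apply eventually_le_cons; eauto].
    unfold sumw; cbn [fold_right fst snd]. right. ring.
Qed.

Lemma oplus_split_eventually_le k : forall M M1 M2, oplus_split M M1 M2 ->
  eventually_le (sumw (Eprob k) [(1/2, M1); (1/2, M2)]) (dirac M).
Proof.
  induction k as [| k IH]; intros M M1 M2 Hs;
    pose proof (oplus_split_sredb _ _ _ Hs) as HsM;
    (apply eventually_le_canon_E; [apply sredb_normalb, HsM|]);
    unfold canon_E; rewrite HsM;
    (destruct (oplus_split_canon_s _ _ _ Hs) as [-> | [Hs1 [Hs2 Hl]]];
      [apply eventually_le_refl|]);
    cbn [sumw fold_right fst snd].
  - rewrite !Eprob_0_nonnormal by (apply sredb_normalb; assumption).
    eapply eventually_le_weaken; [|apply eventually_le_zero, nonneg_canon_s]. lra.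
  - rewrite !Eprob_S_nonnormal by (apply sredb_normalb; assumption).
    unfold canon_E. rewrite Hs1, Hs2.
    eapply eventually_le_weaken;
      [|apply (oplus_split_all_eventually_le _ _ _ _ (nonneg_canon_s M) Hl IH)].
    lra.
Qed.

Lemma step_eventually_le k M m : step M m -> eventually_le (sumw (Eprob k) m) (dirac M).
Proof.
  intros [[M' [Hb ->]] | [M1 [M2 [Hs ->]]]].
  - rewrite sumw_dirac. destruct (beta_full_par _ _ Hb) as [n Hp].
    exact (par_eventually_le k n M M' Hp).
  - apply oplus_split_eventually_le, Hs.
Qed.

Lemma step_nonneg M m : step M m -> nonneg m.
Proof. intros [[M' [_ ->]] | [M1 [M2 [_ ->]]]]; repeat constructor; cbn; lra. Qed.

Lemma Rstep_nonneg a b : Rstep a b -> nonneg a -> nonneg b.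
Proof.
  induction 1 as [| p M m l l' Hs _ IH]; intros Ha; [constructor|].
  inversion Ha as [| ? ? Hp Ha']; subst.
  apply nonneg_app; [apply nonneg_scale; [exact Hp|] | auto].
  destruct Hs as [M' _ | M' m' Hst]; [repeat constructor; cbn; lra | eapply step_nonneg, Hst].
Qed.

Lemma Rstep_eventually_le k a b : Rstep a b -> nonneg a ->
  eventually_le (sumw (Eprob k) b) a.
Proof.
  induction 1 as [| p M m l l' Hs _ IH]; intros Ha; [apply eventually_le_refl|].
  inversion Ha as [| ? ? Hp Ha']; subst.
  rewrite sumw_app, sumw_scale. apply eventually_le_cons; auto.
  destruct Hs as [M' _ | M' m' Hst]; [apply eventually_le_refl | apply step_eventually_le, Hst].
Qed.

Lemma Rstep_seq_eventually_le ms : maximal_seq Rstep ms -> nonneg (ms 0%nat) ->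
  forall n, nonneg (ms n) /\ forall k, eventually_le (sumw (Eprob k) (ms n)) (ms 0%nat).
Proof.
  intros Hms H0. induction n as [| n [Hn IH]].
  - split; [exact H0 | intros k; apply eventually_le_refl].
  - destruct (Hms n) as [Hstep | [_ ->]]; [|split; assumption].
    split; [eapply Rstep_nonneg; eauto|].
    intros k. eapply eventually_le_trans; [apply Rstep_eventually_le; eauto | exact IH].
Qed.

End Eprob.

Lemma canon_E_obs_rel m : nonneg m ->
  exists s, obs_rel RstepE m s /\ forall N k, sumw (Eprob N k) m <= s N.
Proof.
  intros Hm. set (es n := Nat.iter n canon_E_lift m).
  assert (Hobs : forall N n, obs_Nnf (es n) N = sumw (Eprob N n) m)
    by (intros; apply obs_Nnf_iter_canon_E_lift).
  assert (Hbound : forall N, bound (fun x => exists n, x = obs_Nnf (es n) N)).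
  { intros N. exists (sumw (fun _ => 1) m). intros x [n ->]. rewrite Hobs.
    apply sumw_le; [exact Hm | intros; apply Eprob_bounds]. }
  assert (Hinh : forall N, exists x, exists n, x = obs_Nnf (es n) N)
    by (intros N; exists (obs_Nnf (es 0%nat) N), 0%nat; reflexivity).
  exists (fun N => proj1_sig (completeness _ (Hbound N) (Hinh N))). split.
  - exists es. split; [reflexivity|]. split.
    + intros n. left. unfold es. rewrite Nat.iter_succ. apply RstepE_canon_E_lift.
    + intros N. exact (proj2_sig (completeness _ (Hbound N) (Hinh N))).
  - intros N k. apply (proj2_sig (completeness _ (Hbound N) (Hinh N))).
    exists k. symmetry. apply Hobs.
Qed.

Theorem mainTheorem9 :
  forall (m : mdist) (r : subdist),
    is_mdist m ->
    obs_rel Rstep m r ->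
    exists s : subdist, obs_rel RstepE m s /\ subdist_le r s.
Proof.
  intros m r [Hm _] [ms [H0 [Hms Hsup]]].
  assert (Hnn : nonneg m) by (eapply Forall_impl; [|exact Hm]; intros [p X]; cbn; lra).
  destruct (canon_E_obs_rel m Hnn) as [s [Hs Hle]].
  exists s. split; [exact Hs|]. intros N. apply (proj2 (Hsup N)).
  intros x [n ->]. subst m.
  destruct (Rstep_seq_eventually_le N ms Hms Hnn n) as [_ Hev].
  destruct (Hev 0%nat) as [k Hk].
  rewrite obs_Nnf_Eprob_0. eapply Rle_trans; [exact Hk | apply Hle].
Qed.
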